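(* Let $X,Y,X',Y'$ be topological spaces and $g\colon X'\to X$, $h\colon Y\to Y'$ continuous maps, and let $t\colon C(X,Y)\to C(X',Y')$, $t(a)=h\circ a\circ g$, with induced homomorphism $\mathbb Zt\colon\mathbb Z[C(X,Y)]\to\mathbb Z[C(X',Y')]$. Then $\theta((\mathbb Zt)(A))\ge\theta(A)$ for every $A\in\mathbb Z[C(X,Y)]$.
   Context: $C(X,Y)$ is the set of continuous maps; $\mathbb Z[S]$ is the free abelian group on a set $S$. For $A=\sum m_ae_a\in\mathbb Z[C(X,Y)]$ and $Z\subset X$, $A|_Z=\sum m_ae_{a|_Z}\in\mathbb Z[C(Z,Y)]$, and $\theta(A)=\inf\{\#V: V\subset X\text{ finite},\ A|_V\ne0\}\in\mathbb N\cup\{\infty\}$. *)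

From HB Require Import structures.
From mathcomp Require Import all_boot all_order all_algebra.
From mathcomp Require Import all_classical all_reals all_analysis.
Set Implicit Arguments. Unset Strict Implicit. Unset Printing Implicit Defensive.
Import Order.TTheory GRing.Theory Num.Theory.
Local Open Scope classical_set_scope.
Local Open Scope ring_scope.

Notation C X Y := (continuousType X Y).

(* Z[S] : the free abelian group on S, as finitely supported maps S -> int. *)
Definition fin_supp (S : Type) (A : S -> int) : Prop :=
  finite_set [set s | A s != 0].

(* Induced homomorphism Z[S] -> Z[T] of a map f : S -> T:
   (Zf)(A) = sum m_a e_{f a}, i.e. the coefficient of b is the sum of the
   coefficients of A over the fibre f^-1(b). *)
Definition Zmap (S : choiceType) (T : Type) (f : S -> T) (A : S -> int)
  : T -> int := fun b => \sum_(a \in f @^-1` [set b]) A a.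

Definition restr (X : topologicalType) (Y : topologicalType) (s : seq X)
  (a : C X Y) : {x : X | x \in s} -> Y := fun z => a (sval z).

Definition restr_nz (X Y : topologicalType) (A : C X Y -> int) (s : seq X) : Prop :=
  Zmap (@restr X Y s) A <> (fun _ => 0).

Definition thetaP (X Y : topologicalType) (A : C X Y -> int) (n : nat) : Prop :=
  exists s : seq X, [/\ uniq s, size s = n & restr_nz A s].

(* theta(A) in N ∪ {∞}, with None = ∞ *)
Definition theta (X Y : topologicalType) (A : C X Y -> int) : option nat :=
  match pselect (exists n, `[< thetaP A n >]) with
  | left ex => Some (ex_minn ex)
  | right _ => None
  end.

Definition le_oo (m n : option nat) : bool :=
  match m, n with
  | _, None => true
  | None, Some _ => false
  | Some a, Some b => (a <= b)%N
  end.

Definition tmap (X Y X' Y' : topologicalType) (g : C X' X) (h : C Y Y')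
  (a : C X Y) : C X' Y' := (h \o a \o g : C X' Y').

From HB Require Import structures.
From mathcomp Require Import all_boot all_order all_algebra.
From mathcomp Require Import all_classical all_reals all_analysis.
Set Implicit Arguments. Unset Strict Implicit. Unset Printing Implicit Defensive.
Import Order.TTheory GRing.Theory Num.Theory.
Local Open Scope classical_set_scope.
Local Open Scope ring_scope.

(* Let V' be a finite subset of X' witnessing theta((Zt)(A)), and V = g(V').
   Restricting h o a o g to V' only depends on a|_V, i.e. restriction to V'
   composed with t factors through restriction to V.  By functoriality of
   Z[-], (Zt)(A)|_V' is the image of A|_V, so A|_V <> 0 while #V <= #V'. *)

Lemma partition_big_undup (R : Type) (idx : R) (op : Monoid.com_law idx)
    (S T : eqType) (f : S -> T) (r : seq S) (P : pred T) (F : S -> R) :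
  \big[op/idx]_(a <- r | P (f a)) F a =
  \big[op/idx]_(b <- undup (map f r) | P b) \big[op/idx]_(a <- r | f a == b) F a.
Proof.
have -> : \big[op/idx]_(a <- r | P (f a)) F a =
  \big[op/idx]_(a <- r | P (f a))
     \big[op/idx]_(b <- undup (map f r) | b == f a) F a.
  rewrite big_seq_cond [RHS]big_seq_cond; apply: eq_bigr => a /andP[ar _].
  rewrite -big_filter filter_pred1_uniq ?undup_uniq ?big_seq1 //.
  by rewrite mem_undup map_f.
rewrite (exchange_big_dep P); last by move=> a b Pa /eqP ->.
apply: eq_bigr => b Pb; apply: eq_bigl => a.
by case: (eqVneq (f a) b) => [->|ne]; rewrite ?Pb ?andbF.
Qed.

Lemma fin_supp_seq (S : choiceType) (A : S -> int) :
  fin_supp A -> {r : seq S | uniq r & forall a, A a != 0 -> a \in r}.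
Proof.
move=> hA; exists (finmap.enum_fset (fset_set [set s | A s != 0])).
  exact: finmap.fset_uniq.
by move=> a Aa; rewrite in_fset_set // mem_setE.
Qed.

Lemma Zmap_big (S T : choiceType) (f : S -> T) (A : S -> int) (r : seq S) :
    uniq r -> (forall a, A a != 0 -> a \in r) ->
  forall b, Zmap f A b = \sum_(a <- r | f a == b) A a.
Proof.
move=> ur hr b; rewrite /Zmap (fsbigE [seq a <- r | f a == b]) ?filter_uniq //.
- rewrite big_filter_cond; apply: eq_bigl => a.
  by case: eqP => //= <-; apply: mem_set.
- by move=> a /=; rewrite mem_filter => /andP[/eqP ->].
- by move=> a /= fab; rewrite mem_filter fab eqxx /=; apply: contraNeq => /hr.
Qed.

Lemma Zmap0 (S : choiceType) (T : Type) (f : S -> T) :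
  Zmap f (fun _ => 0) = (fun _ => 0).
Proof. by apply: funext => b; apply: fsbig1. Qed.

Lemma Zmap_comp (S T U : choiceType) (f : S -> T) (g : T -> U) (A : S -> int) :
  fin_supp A -> Zmap g (Zmap f A) = Zmap (g \o f) A.
Proof.
move=> /fin_supp_seq[r ur hr]; apply: funext => c.
have Zf := Zmap_big f ur hr.
have supp_Zf b : Zmap f A b != 0 -> b \in undup (map f r).
  rewrite Zf; apply: contraNT => bU; apply/eqP.
  rewrite big_seq_cond big1 // => a /andP[ar /eqP fab].
  by move: bU; rewrite mem_undup -fab map_f.
rewrite (Zmap_big g (undup_uniq _) supp_Zf) (Zmap_big (g \o f) ur hr).
rewrite (partition_big_undup _ f r (fun b => g b == c)).
by apply: eq_bigr => b _; rewrite Zf.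
Qed.

Lemma thetaP_of_theta (X Y : topologicalType) (A : C X Y -> int) (n : nat) :
  theta A = Some n -> thetaP A n.
Proof. by rewrite /theta; case: pselect => // ex [<-]; case: ex_minnP => m /asboolP. Qed.

Lemma theta_le_thetaP (X Y : topologicalType) (A : C X Y -> int) (m n : nat) :
  thetaP A m -> (m <= n)%N -> le_oo (theta A) (Some n).
Proof.
move=> hm mn; rewrite /theta; case: pselect => [ex|nex]; last first.
  by exfalso; apply: nex; exists m; apply/asboolP.
by case: ex_minnP => k _ /(_ m (asboolT hm)) km /=; apply: leq_trans mn.
Qed.

Section RestrictionOfTmap.
Variables (X Y X' Y' : topologicalType) (g : C X' X) (h : C Y Y') (s' : seq X').

Let s := undup (map g s').

Let mem_image (z : {x : X' | x \in s'}) : g (sval z) \in s.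
Proof. by case: z => z zs; rewrite mem_undup map_f. Qed.

Definition restr_push (u : {x : X | x \in s} -> Y) : {x : X' | x \in s'} -> Y' :=
  fun z => h (u (exist _ (g (sval z)) (mem_image z))).

Lemma restr_tmap : @restr X' Y' s' \o tmap g h = restr_push \o @restr X Y s.
Proof. by apply: funext => a; apply: funext => z. Qed.

Lemma restr_nz_tmap (A : C X Y -> int) :
  fin_supp A -> restr_nz (Zmap (tmap g h) A) s' -> restr_nz A s.
Proof.
move=> hA nz Z0; apply: nz.
by rewrite /restr_nz Zmap_comp // restr_tmap -Zmap_comp // Z0 Zmap0.
Qed.

End RestrictionOfTmap.

Theorem mainTheorem14 (X Y X' Y' : topologicalType) (g : C X' X) (h : C Y Y')
  (A : C X Y -> int) (hA : fin_supp A) :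
  le_oo (theta A) (theta (Zmap (tmap g h) A)).
Proof.
case eqn: (theta (Zmap (tmap g h) A)) => [n|]; last by case: (theta A).
have [s' [_ <- nz]] := thetaP_of_theta eqn.
apply: (@theta_le_thetaP _ _ _ (size (undup (map g s')))).
  by exists (undup (map g s')); split; [exact: undup_uniq | | exact: restr_nz_tmap hA nz].
by rewrite (leq_trans (size_undup _)) ?size_map.
Qed.
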